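(* For $n\ge2$, $c_n=|\mathcal C_n(321)|\ge |S_{n-1}(132,231)|=2^{n-2}$.
   Context: A permutation $\pi=\pi_1\cdots\pi_n$ (one-line notation) contains a classical pattern $p\in S_k$ if some subsequence $\pi_{t_1}\cdots\pi_{t_k}$ ($t_1<\dots<t_k$) is order-isomorphic to $p$; otherwise it avoids $p$. $S_m(132,231)$ is the set of permutations of $[m]$ avoiding both $132$ and $231$. $\mathcal C_n$ is the set of cyclic permutations of $[n]$ (a single $n$-cycle), $\mathcal C_n(321)$ those avoiding $321$, and $c_n=|\mathcal C_n(321)|$. *)

From mathcomp Require Import all_boot all_fingroup.
Set Implicit Arguments. Unset Strict Implicit. Unset Printing Implicit Defensive.

(* Permutations of [n] are represented as {perm 'I_n} (0-based values);
   one-line notation: pi_1 ... pi_n = pi 0, ..., pi (n-1). *)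

Definition contains (n : nat) (pi : {perm 'I_n}) (p : seq nat) : bool :=
  [exists t : {ffun 'I_(size p) -> 'I_n},
     [forall i : 'I_(size p), forall j : 'I_(size p),
        ((i < j) ==> (t i < t j)) &&
        ((pi (t i) < pi (t j)) == (nth 0 p i < nth 0 p j))]].

Definition avoids (n : nat) (pi : {perm 'I_n}) (p : seq nat) : bool :=
  ~~ contains pi p.

Definition p132 : seq nat := [:: 1; 3; 2].
Definition p231 : seq nat := [:: 2; 3; 1].
Definition p321 : seq nat := [:: 3; 2; 1].

Definition cyclic_perm (n : nat) (pi : {perm 'I_n}) : bool :=
  #|porbits pi| == 1.

Definition S_av_132_231 (m : nat) : {set {perm 'I_m}} :=
  [set pi | avoids pi p132 && avoids pi p231].

Definition C_av_321 (n : nat) : {set {perm 'I_n}} :=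
  [set pi | cyclic_perm pi && avoids pi p321].

Definition c_ (n : nat) : nat := #|C_av_321 n|.

From mathcomp Require Import all_boot all_fingroup.
From mathcomp Require Import zify.
Set Implicit Arguments. Unset Strict Implicit. Unset Printing Implicit Defensive.

(* A permutation avoids both 132 and 231 iff it has no peak (positions a < b < c
   with pi_b above pi_a and pi_c), i.e. it decreases down to its minimum and then
   increases. Its maximum then sits at one of the two ends, and removing it gives
   the count 2^(m-1) for S_m(132,231) by induction.
   For such pi in S_m, prepend 0 to the complement of pi: the resulting word
   v_0 v_1 ... v_m increases up to its maximum and then decreases. The (m+1)-cycle
   v_0 -> v_1 -> ... -> v_m -> v_0, the conjugate of k |-> k+1 by v, is increasing
   on the values v_k taken before the peak, and also on the remaining ones (the last
   is sent to v_0 = 0); being the union of two increasing subsequences it avoids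
   321. The cycle determines v as the orbit of 0, hence pi. *)

Lemma ltn_flip (u v u' v' : nat) :
  u != v -> u' != v' -> (u < v) = (u' < v') -> (v < u) = (v' < u').
Proof. by case: (ltngtP u v); case: (ltngtP u' v'). Qed.

Lemma perm_val_neq n (s : {perm 'I_n}) (a b : 'I_n) : a < b -> (s a : nat) != s b.
Proof. by move=> ab; apply: contraTneq ab => /val_inj/perm_inj ->; rewrite ltnn. Qed.

Lemma contains3P n (s : {perm 'I_n}) (x y z : nat) : uniq [:: x; y; z] ->
  reflect (exists a b c : 'I_n, [/\ a < b, b < c, (s a < s b) = (x < y),
             (s a < s c) = (x < z) & (s b < s c) = (y < z)])
          (contains s [:: x; y; z]).
Proof.
rewrite /= !inE andbT => /andP[/norP[xy xz] yz].
apply: (iffP existsP) => [[t /forallP t_emb] | [a [b [c [ab bc sab sac sbc]]]]].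
  pose o k (lt_k3 : k < 3) := Ordinal lt_k3.
  have /= /andP[ab /eqP sab] := forallP (t_emb (o 0 isT)) (o 1 isT).
  have /= /andP[ac /eqP sac] := forallP (t_emb (o 0 isT)) (o 2 isT).
  have /= /andP[bc /eqP sbc] := forallP (t_emb (o 1 isT)) (o 2 isT).
  by exists (t (o 0 isT)), (t (o 1 isT)), (t (o 2 isT)).
have ac := ltn_trans ab bc.
have sba := ltn_flip (perm_val_neq s ab) xy sab.
have sca := ltn_flip (perm_val_neq s ac) xz sac.
have scb := ltn_flip (perm_val_neq s bc) yz sbc.
exists [ffun k : 'I_3 => tnth [tuple a; b; c] k].
apply/forallP => -[[|[|[|i]]] lt_i3] //; apply/forallP => -[[|[|[|j]]] lt_j3] //;
  by rewrite !ffunE /= ?ltnn ?ab ?bc ?ac ?sab ?sac ?sbc ?sba ?sca ?scb ?eqxx.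
Qed.

Definition peakless n (s : {perm 'I_n}) : bool :=
  [forall a : 'I_n, forall b : 'I_n, forall c : 'I_n,
     (a < b < c) ==> (s b < s a) || (s b < s c)].

Lemma peaklessP n (s : {perm 'I_n}) :
  reflect (forall a b c : 'I_n, a < b -> b < c -> (s b < s a) || (s b < s c))
          (peakless s).
Proof.
apply: (iffP forallP) => [no_peak a b c ab bc | no_peak a].
  by have /forallP/(_ c) := forallP (no_peak a) b; rewrite ab bc.
by apply/forallP => b; apply/forallP => c; apply/implyP => /andP[]; apply: no_peak.
Qed.

Lemma peaklessE n (s : {perm 'I_n}) : peakless s = avoids s p132 && avoids s p231.
Proof.
have contains132P := @contains3P n s 1 3 2 isT.
have contains231P := @contains3P n s 2 3 1 isT.
rewrite /avoids -negb_or; apply/peaklessP/norP => [no_peak | [no132 no231] a b c ab bc].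
  split; [apply/contains132P | apply/contains231P];
    case=> a [b [c [ab bc /= sab _ sbc]]]; move: (no_peak a b c ab bc);
    by rewrite sbc orbF ltnNge ltnW.
have [//|sab|/val_inj/perm_inj ba] := ltngtP (s b) (s a); last by rewrite ba ltnn in ab.
have [//|scb|/val_inj/perm_inj bc'] := ltngtP (s b) (s c); last by rewrite bc' ltnn in bc.
have [sac|sca|/val_inj/perm_inj ac] := ltngtP (s a) (s c).
- case/negP: no132; apply/contains132P; exists a, b, c.
  by split; rewrite //= ?sab ?sac //; apply/negbTE; rewrite -leqNgt ltnW.
- case/negP: no231; apply/contains231P; exists a, b, c.
  by split; rewrite //= ?sab //; apply/negbTE; rewrite -leqNgt ltnW.
- by move: (ltn_trans ab bc); rewrite ac ltnn.
Qed.

Section PeaklessShape.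
Variables (n : nat) (s : 'S_n.+1).
Hypothesis s_peakless : peakless s.

Let s_min : (s ((s^-1)%g ord0) : nat) = 0.
Proof. by rewrite permKV. Qed.

Lemma peakless_decr_to_min (i j : 'I_n.+1) : i < j -> j <= (s^-1)%g ord0 -> s j < s i.
Proof.
move=> ij j_le_min; have [j_min | j_lt_min] := eqVneq j ((s^-1)%g ord0).
  by move: (perm_val_neq s ij); rewrite j_min s_min lt0n.
have /peaklessP/(_ i j ((s^-1)%g ord0) ij) := s_peakless.
by rewrite s_min ltn0 orbF; apply; rewrite ltn_neqAle j_lt_min.
Qed.

Lemma peakless_incr_from_min (i j : 'I_n.+1) : i < j -> (s^-1)%g ord0 <= i -> s i < s j.
Proof.
move=> ij min_le_i; have [min_i | min_lt_i] := eqVneq ((s^-1)%g ord0) i.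
  by move: (perm_val_neq s ij); rewrite -min_i s_min eq_sym lt0n.
have /peaklessP/(_ ((s^-1)%g ord0) i j) := s_peakless.
by rewrite s_min ltn0 /=; apply; rewrite // ltn_neqAle min_lt_i.
Qed.

End PeaklessShape.

Lemma lift_ltn n (h : 'I_n.+1) (a b : 'I_n) : (lift h a < lift h b) = (a < b).
Proof. by rewrite /= !ltnNge leq_bump2. Qed.

Lemma lift_perm_inj n (i j : 'I_n.+1) : injective (lift_perm i j).
Proof.
move=> s t st; apply/permP => k; apply: (@lift_inj _ j).
by rewrite -!(@lift_perm_lift _ i j) st.
Qed.

Lemma lift_perm_surj n (s : 'S_n.+1) (i j : 'I_n.+1) :
  s i = j -> exists t : 'S_n, s = lift_perm i j t.
Proof.
move=> sij; pose f (k : 'I_n) := odflt k (unlift j (s (lift i k))).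
have fE k : lift j (f k) = s (lift i k).
  rewrite /f; case: unliftP => [w -> // | /esym]; rewrite -sij => /perm_inj.
  by move/eqP; rewrite (negbTE (neq_lift i k)).
have f_inj : injective f.
  by move=> k1 k2 /(congr1 (lift j)); rewrite !fE => /perm_inj/lift_inj.
exists (perm f_inj); apply/permP => x.
by case: (unliftP i x) => [k|] ->; rewrite ?lift_perm_id // lift_perm_lift permE fE.
Qed.

Lemma peakless_lift_max n (i : 'I_n.+2) (s : 'S_n.+1) : (i == ord0) || (i == ord_max) ->
  peakless (lift_perm i ord_max s) = peakless s.
Proof.
move=> i_end; set t := lift_perm i ord_max s.
have t_i : (t i : nat) = n.+1 by rewrite lift_perm_id.
have t_lift k : (t (lift i k) : nat) = s k by rewrite lift_perm_lift lift_max.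
apply/peaklessP/peaklessP => no_peak a b c ab bc.
  by have := no_peak (lift i a) (lift i b) (lift i c); rewrite !lift_ltn !t_lift; apply.
have [b' def_b | b_i] := unliftP i b; last first.
  case/orP: i_end => /eqP i_end; move: ab bc; rewrite b_i i_end // => _ /=.
  by rewrite ltnNge -ltnS ltn_ord.
have [a' def_a | ->] := unliftP i a; last by rewrite t_i def_b t_lift ltn_ord.
have [c' def_c | ->] := unliftP i c; last by rewrite t_i def_b t_lift ltn_ord orbT.
move: ab bc; rewrite def_a def_b def_c !lift_ltn !t_lift; exact: no_peak.
Qed.

Lemma peakless_max_end n (s : 'S_n.+2) :
  peakless s -> s ord0 = ord_max \/ s ord_max = ord_max.
Proof.
move=> /peaklessP no_peak; set k := (s^-1)%g ord_max.
have s_k : s k = ord_max by rewrite permKV.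
have [k0 | k_neq0] := eqVneq k ord0; first by left; rewrite -k0.
have [kmax | k_neq_max] := eqVneq k ord_max; first by right; rewrite -{1}kmax.
have k_gt0 : 0 < k by rewrite lt0n; apply: contraNneq k_neq0 => k0; apply/eqP/val_inj.
have k_lt_max : k < n.+1.
  have : (k : nat) != n.+1 by apply: contraNneq k_neq_max => kmax; apply/eqP/val_inj.
  by have := ltn_ord k; lia.
have := no_peak ord0 k ord_max k_gt0 k_lt_max; rewrite s_k /=.
by have := ltn_ord (s ord0); have := ltn_ord (s ord_max); lia.
Qed.

Lemma peakless_max_at_end n (i : 'I_n.+2) : (i == ord0) || (i == ord_max) ->
  [set s : 'S_n.+2 | peakless s & s i == ord_max] =
  lift_perm i ord_max @: [set s | peakless s].
Proof.
move=> i_end; apply/setP => s; rewrite !inE.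
apply/andP/imsetP => [[s_peakless /eqP/lift_perm_surj[t def_s]] | [t t_peakless ->]].
  by exists t; rewrite // inE -(peakless_lift_max t i_end) -def_s.
by rewrite inE in t_peakless; rewrite peakless_lift_max // lift_perm_id.
Qed.

Lemma card_peakless n : #|[set s : 'S_n.+1 | peakless s]| = 2 ^ n.
Proof.
elim: n => [|n IHn].
  rewrite -[RHS](card_Sn 1) -cardsT; apply: eq_card => s; rewrite !inE.
  by apply/peaklessP => -[[|//] ?] -[[|//] ?].
have split_max_end : [set s : 'S_n.+2 | peakless s] =
    [set s | peakless s & s ord0 == ord_max] :|: [set s | peakless s & s ord_max == ord_max].
  apply/setP => s; rewrite !inE -andb_orr; apply/esym/andb_idr => /peakless_max_end.
  by case=> ->; rewrite eqxx ?orbT.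
have disjoint_ends :
    [set s : 'S_n.+2 | peakless s & s ord0 == ord_max] :&:
    [set s | peakless s & s ord_max == ord_max] = set0.
  apply/setP => s; rewrite !inE andbACA andbb; apply/negbTE.
  apply/nandP; right; apply/andP => -[/eqP s0 /eqP smax].
  by move: s0; rewrite -smax => /perm_inj/(congr1 val).
rewrite split_max_end cardsU disjoint_ends cards0 subn0.
rewrite !peakless_max_at_end ?eqxx ?orbT // !card_imset; try exact: lift_perm_inj.
by rewrite IHn expnS mul2n addnn.
Qed.

Section ConjugatedRotation.
Variable n : nat.

Definition rotation : 'S_n.+1 := perm (@ordS_inj n.+1).

Lemma rotation_val (k : 'I_n.+1) : (rotation k : nat) = k.+1 %% n.+1.
Proof. by rewrite permE. Qed.

Lemma rotationX i (k : 'I_n.+1) : ((rotation ^+ i)%g k : nat) = (k + i) %% n.+1.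
Proof.
elim: i => [|i IHi]; first by rewrite expg0 perm1 addn0 modn_small.
by rewrite expgSr permM rotation_val IHi -addn1 modnDml -addnA addn1.
Qed.

Lemma rotationX_ord0 (k : 'I_n.+1) : (rotation ^+ k)%g ord0 = k.
Proof. by apply: ord_inj; rewrite rotationX add0n modn_small. Qed.

Section FixingZero.
Variable rho : 'S_n.+1.
Hypothesis rho0 : rho ord0 = ord0.

Lemma conj_rotationX_ord0 (k : 'I_n.+1) : ((rotation ^ rho) ^+ k)%g ord0 = rho k.
Proof. by rewrite -{1}rho0 -conjXg permJ rotationX_ord0. Qed.

Lemma cyclic_conj_rotation : cyclic_perm (rotation ^ rho)%g.
Proof.
rewrite /cyclic_perm (_ : porbits _ = [set porbit (rotation ^ rho)%g ord0]) ?cards1 //.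
apply/setP => X; rewrite inE; apply/imsetP/eqP => [[x _ ->] | ->]; last by exists ord0.
apply/eqP; rewrite eq_porbit_mem; apply/porbitP; exists ((rho^-1)%g x).
by rewrite conj_rotationX_ord0 permKV.
Qed.

End FixingZero.

Lemma conj_rotation_inj (rho1 rho2 : 'S_n.+1) : rho1 ord0 = ord0 -> rho2 ord0 = ord0 ->
  (rotation ^ rho1)%g = (rotation ^ rho2)%g -> rho1 = rho2.
Proof.
move=> rho1_0 rho2_0 conj_eq; apply/permP => k.
by rewrite -(conj_rotationX_ord0 rho1_0) -(conj_rotationX_ord0 rho2_0) conj_eq.
Qed.

End ConjugatedRotation.

Arguments rotation {n}.

Lemma avoids321_of_two_runs n (s : {perm 'I_n}) (P : pred 'I_n) :
  (forall x y : 'I_n, x < y -> P x = P y -> s x < s y) -> avoids s p321.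
Proof.
move=> incr_on_runs; apply/negP.
case/(@contains3P n s 3 2 1 isT) => a [b [c [ab bc /= sab sac sbc]]].
have := incr_on_runs a b ab; have := incr_on_runs b c bc.
have := incr_on_runs a c (ltn_trans ab bc); rewrite sab sac sbc.
by case: (P a); case: (P b); case: (P c) => h1 h2 h3;
  first [have := h1 erefl | have := h2 erefl | have := h3 erefl].
Qed.

Section PeakedConjugate.
Variables (n : nat) (rho : 'S_n.+1) (p : 'I_n.+1).
Hypothesis rho0 : rho ord0 = ord0.
Hypothesis rho_incr : forall k l : 'I_n.+1, k < l -> l <= p -> rho k < rho l.
Hypothesis rho_decr : forall k l : 'I_n.+1, p <= k -> k < l -> rho l < rho k.

Let rotation_succ (k : 'I_n.+1) : k < n -> (rotation k : nat) = k.+1.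
Proof. by move=> k_lt_n; rewrite rotation_val modn_small. Qed.

Lemma avoids321_conj_rotation : avoids (rotation ^ rho)%g p321.
Proof.
apply: (@avoids321_of_two_runs _ _ (fun x => (rho^-1)%g x < p)) => x y.
have [k ->] : exists k, x = rho k by exists ((rho^-1)%g x); rewrite permKV.
have [l ->] : exists l, y = rho l by exists ((rho^-1)%g y); rewrite permKV.
rewrite !permJ !permK => rho_kl same_run.
have p_le_n := ltn_ord p; rewrite ltnS in p_le_n.
have [k_lt_p | p_le_k] := ltnP k p.
  have l_lt_p : l < p by rewrite -same_run.
  have k_lt_l : k < l.
    case: (ltngtP k l) => [// | l_lt_k | /val_inj k_l]; last by rewrite k_l ltnn in rho_kl.
    by have := rho_incr l_lt_k (ltnW k_lt_p); lia.
  by apply: rho_incr; rewrite !rotation_succ //; lia.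
have p_le_l : p <= l by rewrite leqNgt -same_run -leqNgt.
have l_lt_k : l < k.
  case: (ltngtP k l) => [k_lt_l | // | /val_inj k_l]; last by rewrite k_l ltnn in rho_kl.
  by have := rho_decr p_le_k k_lt_l; lia.
have rot_l : (rotation l : nat) = l.+1 by apply: rotation_succ; have := ltn_ord k; lia.
have [k_max | k_lt_n] := eqVneq (k : nat) n.
  have -> : rotation k = ord0 by apply: ord_inj; rewrite rotation_val k_max modnn.
  have rot_l_pos : (ord0 : 'I_n.+1) < rotation l by rewrite rot_l.
  by move: (perm_val_neq rho rot_l_pos); rewrite rho0 lt0n eq_sym.
have rot_k : (rotation k : nat) = k.+1 by apply: rotation_succ; have := ltn_ord k; lia.
by apply: rho_decr; rewrite rot_l ?rot_k; lia.
Qed.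

End PeakedConjugate.

Definition complement_shift m (pi : 'S_m) : 'S_m.+1 :=
  lift_perm ord0 ord0 (pi * perm (@rev_ord_inj m))%g.

Lemma complement_shift0 m (pi : 'S_m) : complement_shift pi ord0 = ord0.
Proof. exact: lift_perm_id. Qed.

Lemma complement_shift_lift m (pi : 'S_m) (k : 'I_m) :
  (complement_shift pi (lift ord0 k) : nat) = m - pi k.
Proof.
by rewrite lift_perm_lift lift0 permM permE /=; have := ltn_ord (pi k); lia.
Qed.

Lemma complement_shift_inj m : injective (@complement_shift m).
Proof. by move=> pi1 pi2 /lift_perm_inj/mulIg. Qed.

Section PeaklessComplementShift.
Variables (m : nat) (pi : 'S_m.+1).
Hypothesis pi_peakless : peakless pi.
Let p : 'I_m.+2 := lift ord0 ((pi^-1)%g ord0).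

Lemma complement_shift_incr (k l : 'I_m.+2) :
  k < l -> l <= p -> complement_shift pi k < complement_shift pi l.
Proof.
have [l' -> | ->] := unliftP ord0 l; last by rewrite ltn0.
rewrite complement_shift_lift.
have [k' -> | ->] := unliftP ord0 k; last by rewrite complement_shift0 subn_gt0 ltn_ord.
rewrite complement_shift_lift lift_ltn /p /= leq_bump2 => k_lt_l l_le_min.
have := peakless_decr_to_min pi_peakless k_lt_l l_le_min.
by have := ltn_ord (pi k'); lia.
Qed.

Lemma complement_shift_decr (k l : 'I_m.+2) :
  p <= k -> k < l -> complement_shift pi l < complement_shift pi k.
Proof.
have [k' -> | ->] := unliftP ord0 k; last by rewrite ltn0.
have [l' -> | ->] := unliftP ord0 l; last by rewrite ltn0.
rewrite !complement_shift_lift lift_ltn /p /= leq_bump2 => min_le_k k_lt_l.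
have := peakless_incr_from_min pi_peakless k_lt_l min_le_k.
by have := ltn_ord (pi l'); lia.
Qed.

End PeaklessComplementShift.

Definition cycle_of m (pi : 'S_m) : 'S_m.+1 := (rotation ^ complement_shift pi)%g.

Lemma cycle_of_inj m : injective (@cycle_of m).
Proof.
move=> pi1 pi2 /conj_rotation_inj eq_shift.
by apply: complement_shift_inj; apply: eq_shift; apply: complement_shift0.
Qed.

Lemma cycle_of_in_C_av_321 m (pi : 'S_m.+1) : peakless pi -> cycle_of pi \in C_av_321 m.+2.
Proof.
move=> pi_peakless; rewrite inE cyclic_conj_rotation ?complement_shift0 //=.
apply: avoids321_conj_rotation (complement_shift0 pi) _ _.
  exact: complement_shift_incr.
exact: complement_shift_decr.
Qed.

Theorem mainTheorem6 (n : nat) : 2 <= n ->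
  c_ n >= #|S_av_132_231 n.-1| /\ #|S_av_132_231 n.-1| = 2 ^ (n - 2).
Proof.
case: n => [|[|m]] // _; rewrite subn2 /=.
have S_peakless : S_av_132_231 m.+1 = [set pi | peakless pi].
  by apply/setP => pi; rewrite !inE peaklessE.
rewrite S_peakless card_peakless; split => //.
rewrite -(card_peakless m) -(card_imset _ (@cycle_of_inj m.+1)).
apply/subset_leq_card/subsetP => s /imsetP[pi]; rewrite inE => pi_peakless ->.
exact: cycle_of_in_C_av_321.
Qed.
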